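(* There exists a $[7,3]_2$ MWS code, and there exists a $[32,3]_3$ MWS code.
   Context: An $[n,k]_q$ code is a $k$-dimensional subspace of $\mathbb{F}_q^n$, non-degenerate (no coordinate identically zero on the code). It is a maximum weight spectrum (MWS) code if the set of its non-zero Hamming weights has cardinality $\frac{q^k-1}{q-1}$ (so $7$ for $q=2,k=3$ and $13$ for $q=3,k=3$). *)

From mathcomp Require Import all_boot all_algebra all_field.
Set Implicit Arguments. Unset Strict Implicit. Unset Printing Implicit Defensive.
Import GRing.Theory.
Local Open Scope ring_scope.

(* Linear codes over a finite field F, of length n and dimension k,
   represented by a k x n generator matrix G; the code is the row space of G. *)
Section Codes.
Variable F : finFieldType.

Definition hwt n (c : 'rV[F]_n) : nat := #|[set i | c 0 i != 0]|.

Definition codewords k n (G : 'M[F]_(k, n)) : {set 'rV[F]_n} :=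
  [set c : 'rV[F]_n | (c <= G)%MS].

Definition has_dim k n (G : 'M[F]_(k, n)) : Prop := \rank G = k.

Definition nondegenerate k n (G : 'M[F]_(k, n)) : Prop :=
  forall i : 'I_n, exists2 c : 'rV[F]_n, c \in codewords G & c 0 i != 0.

Definition weight_set k n (G : 'M[F]_(k, n)) : {set 'I_n.+1} :=
  [set (inord (hwt c) : 'I_n.+1) | c in codewords G :\ 0].

Definition is_MWS_code k n (G : 'M[F]_(k, n)) : Prop :=
  [/\ has_dim G, nondegenerate G &
      #|weight_set G| = ((#|F| ^ k).-1 %/ (#|F|.-1))%N].
End Codes.

(* A generator matrix whose first k columns form the identity is row-free, so
   the nonzero codewords are exactly the products [m *m G] with [m] a nonzero
   message.  The weight set is then read off the weights of the q^k - 1 nonzero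
   messages, which for explicit [7,3]_2 and [32,3]_3 matrices are evaluated by
   computation. *)

From mathcomp Require Import all_boot all_algebra all_field.

Set Implicit Arguments. Unset Strict Implicit. Unset Printing Implicit Defensive.
Import GRing.Theory.
Local Open Scope ring_scope.

Lemma card_set_nat N (P : pred nat) : #|[set i : 'I_N | P i]| = count P (iota 0 N).
Proof. by rewrite cardsE cardE /enum_mem -enumT size_filter -val_enum_ord count_map. Qed.

Section Words.
Variables (T : eqType) (xs : seq T).

Fixpoint words k : seq (seq T) :=
  if k is k'.+1 then [seq x :: w | x <- xs, w <- words k'] else [:: [::]].

Lemma mem_words k s : (s \in words k) = (size s == k) && all (mem xs) s.
Proof.
elim: k s => [|k IHk] [|x s] //=; first by apply/allpairsP => -[[y w] []].
rewrite eqSS andbCA -IHk.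
by apply/allpairsP/andP => [[[y w] /= [yxs ws [-> ->]]] | [xxs sw]] //; exists (x, s).
Qed.

End Words.

Section Messages.
Variables (F : finFieldType) (k n : nat).

Lemma hwt_le (c : 'rV[F]_n) : (hwt c <= n)%N.
Proof. by rewrite -[n in (_ <= n)%N]card_ord max_card. Qed.

Lemma mem_weight_set (G : 'M[F]_(k, n)) (w : 'I_n.+1) : row_free G ->
  (w \in weight_set G) = [exists m : 'rV_k, (m != 0) && (hwt (m *m G) == w)].
Proof.
move=> Gfree; apply/imsetP/existsP => [[c] | [m /andP [m0 /eqP mGw]]].
  rewrite !inE => /andP [c0 /submxP [m cE]] ->; exists m.
  rewrite -cE inordK ?ltnS ?hwt_le // eqxx andbT.
  by apply: contraNneq c0 => m0; rewrite cE m0 mul0mx.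
exists (m *m G); last by rewrite mGw inord_val.
rewrite !inE submxMl andbT; apply: contra m0 => /eqP mG0.
by apply/eqP/(row_free_inj Gfree); rewrite /= mG0 mul0mx.
Qed.

Definition word_row (s : seq F) : 'rV[F]_k := \row_(i < k) s`_i.

Lemma word_row_eq0 s : size s = k -> (word_row s == 0) = all (pred1 0) s.
Proof.
move=> sk; apply/eqP/(all_nthP 0) => [s0 i | s0].
  rewrite sk => ik /=; apply/eqP.
  by have /rowP/(_ (Ordinal ik)) := s0; rewrite !mxE.
by apply/rowP => i; rewrite !mxE; apply/eqP/s0; rewrite sk.
Qed.

Variable xs : seq F.
Hypothesis mem_xs : forall x, x \in xs.

Lemma exists_nonzero_row_words (P : pred 'rV[F]_k) :
  [exists m, (m != 0) && P m] =
  has (P \o word_row) [seq s <- words xs k | ~~ all (pred1 0) s].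
Proof.
have words_xs s : (s \in words xs k) = (size s == k).
  by rewrite mem_words andb_idr // => _; apply/allP => x _; apply: mem_xs.
apply/existsP/hasP => [[m /andP [m0 Pm]] | [s]].
  pose s := [seq m 0 i | i <- enum 'I_k].
  have sk : size s = k by rewrite size_map size_enum_ord.
  have sm : word_row s = m.
    by apply/rowP => i; rewrite mxE (nth_map i) ?size_enum_ord // nth_ord_enum.
  by exists s; rewrite /= ?sm // mem_filter words_xs sk eqxx -word_row_eq0 // sm m0.
rewrite mem_filter words_xs => /andP [s0 /eqP sk] Ps; exists (word_row s) => //.
by rewrite -word_row_eq0 // in s0; rewrite s0.
Qed.

End Messages.

Section MatrixOfEntries.
Variables (F : finFieldType) (k n : nat) (g : nat -> nat -> F).
Local Notation G := (\matrix_(i < k, j < n) g i j).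

(* Indices range over [iota] rather than ordinals so that, once [bigop] is
   unlocked, [vm_compute] evaluates this on concrete data. *)
Definition word_weight (s : seq F) : nat :=
  count (fun j => \sum_(0 <= i < k) s`_i * g i j != 0) (iota 0 n).

Lemma hwt_word_row s : hwt (word_row k s *m G) = word_weight s.
Proof.
rewrite /hwt /word_weight -card_set_nat; apply: eq_card => j.
rewrite !inE mxE big_mkord; congr (_ != 0); apply: eq_bigr => i _.
by rewrite !mxE.
Qed.

Definition id_block : bool :=
  all (fun i => all (fun j => g i j == (i == j)%:R) (iota 0 k)) (iota 0 k).

Definition no_zero_column : bool :=
  all (fun j => has (fun i => g i j != 0) (iota 0 k)) (iota 0 n).

Lemma row_free_id_block : (k <= n)%N -> id_block -> row_free G.
Proof.
move=> kn /allP idG; have iota_ord (l : 'I_k) : val l \in iota 0 k.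
  by rewrite mem_iota ltn_ord.
apply: inj_row_free => u uG0; apply/rowP => i.
have id_entry (l : 'I_k) : g l i = (l == i)%:R.
  by apply/eqP; apply: (allP (idG l (iota_ord l))); apply: iota_ord.
have /rowP/(_ (widen_ord kn i)) := uG0; rewrite !mxE => <-.
rewrite -{1}(mulmx1 u) !mxE; apply: eq_bigr => l _.
by rewrite !mxE id_entry.
Qed.

Lemma nondegenerate_entries : no_zero_column -> nondegenerate G.
Proof.
move=> /allP nz_cols j.
have /hasP [i] : has (fun i => g i j != 0) (iota 0 k).
  by apply: nz_cols; rewrite mem_iota ltn_ord.
rewrite mem_iota => /= ik gij.
by exists (row (Ordinal ik) G); rewrite ?inE ?row_sub // !mxE.
Qed.

Variable xs : seq F.
Hypothesis mem_xs : forall x, x \in xs.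

(* [mem weights] rather than [fun w => w \in weights]: under call-by-value
   evaluation the list is then computed once, not once per candidate weight. *)
Local Notation weights :=
  [seq word_weight s | s <- words xs k & ~~ all (pred1 0) s].

Lemma card_weight_set_entries : row_free G ->
  #|weight_set G| = count (mem weights) (iota 0 n.+1).
Proof.
move=> Gfree; rewrite -card_set_nat; apply: eq_card => w.
rewrite inE (mem_weight_set _ Gfree) (exists_nonzero_row_words mem_xs).
rewrite -[RHS]/(val w \in _) -has_pred1 has_map.
by apply: eq_has => s; rewrite /= hwt_word_row.
Qed.

Lemma is_MWS_code_entries :
  (k <= n)%N -> id_block -> no_zero_column ->
  count (mem weights) (iota 0 n.+1) = ((#|F| ^ k).-1 %/ #|F|.-1)%N ->
  is_MWS_code G.
Proof.
move=> kn idG nzG card_weights; have Gfree := row_free_id_block kn idG.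
split; [exact/eqP | exact: nondegenerate_entries | by rewrite card_weight_set_entries].
Qed.

End MatrixOfEntries.

(* [enum 'F_p] does not evaluate: [insub] matches on the opaque proof [idP]. *)
Definition Fp_elements p : seq 'F_p := [seq i%:R | i <- iota 0 p].

Lemma mem_Fp_elements p : prime p -> forall x : 'F_p, x \in Fp_elements p.
Proof.
move=> p_pr x; apply/mapP; exists (val x); last by rewrite natr_Zp.
by rewrite mem_iota /= -[X in (_ < X)%N](Fp_cast p_pr) ltn_ord.
Qed.

Definition rows_entry (V : nmodType) (rows : seq (seq V)) (i j : nat) : V :=
  (nth [::] rows i)`_j.

Definition rows_7_3_2 : seq (seq 'F_2) :=
  [:: [:: 1; 0; 0; 0; 0; 0; 0];
      [:: 0; 1; 0; 0; 1; 1; 1];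
      [:: 0; 0; 1; 1; 0; 0; 0]].

Lemma is_MWS_code_7_3_2 : is_MWS_code (\matrix_(i < 3, j < 7) rows_entry rows_7_3_2 i j).
Proof.
apply: (is_MWS_code_entries (mem_Fp_elements (isT : prime 2)));
  [by [] | by vm_compute | by vm_compute |].
by rewrite card_Fp // /word_weight unlock; vm_compute.
Qed.

(* The 13 classes of proportional nonzero messages have the pairwise distinct
   weights 13, 16, 18, 19, 20, 21, 22, 24, 25, 26, 27, 28 and 29. *)
Definition rows_32_3_3 : seq (seq 'F_3) :=
  [:: [:: 1;0;0;0;0;0;0;0;0;1;1;1;1;1;1;1;1;1;1;1;1;1;1;1;1;1;1;1;1;1;1;1];
      [:: 0;1;0;0;0;0;0;0;1;0;0;0;0;1;1;1;1;1;1;1;1;1;1;1;1;1;2;2;2;2;2;2];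
      [:: 0;0;1;1;1;1;1;1;1;1;1;1;1;0;0;0;0;0;0;0;0;0;0;1;1;2;0;1;1;1;2;2]].

Lemma is_MWS_code_32_3_3 :
  is_MWS_code (\matrix_(i < 3, j < 32) rows_entry rows_32_3_3 i j).
Proof.
apply: (is_MWS_code_entries (mem_Fp_elements (isT : prime 3)));
  [by [] | by vm_compute | by vm_compute |].
by rewrite card_Fp // /word_weight unlock; vm_compute.
Qed.

Theorem mainTheorem13 :
  (exists G : 'M['F_2]_(3, 7), is_MWS_code G) /\
  (exists G : 'M['F_3]_(3, 32), is_MWS_code G).
Proof. by split; eexists; [exact: is_MWS_code_7_3_2 | exact: is_MWS_code_32_3_3]. Qed.
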